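(* Let $\gamma>1$, $\varepsilon>0$, $L>0$, $T>0$, $\Omega=(-L,L)$, and let $F_1,F_2,G_1,G_2$ be feasible growth functions. Let $n^{(1)}_{\gamma,\mathrm{init}},n^{(2)}_{\gamma,\mathrm{init}}\ge0$ be initial data supported in $\Omega$ and let $(n_{\gamma,\varepsilon}^{(1)},n_{\gamma,\varepsilon}^{(2)})$ solve the regularised problem on $Q_T=\Omega\times(0,T)$ (see context), with $n_{\gamma,\varepsilon}=n_{\gamma,\varepsilon}^{(1)}+n_{\gamma,\varepsilon}^{(2)}$. Let $R_\infty>0$ be an $L^\infty$ bound for $|R_{\gamma,\varepsilon}|$, where $R_{\gamma,\varepsilon}=c^{(1)}_{\gamma,\varepsilon}F(p_{\gamma,\varepsilon})+c^{(2)}_{\gamma,\varepsilon}G(p_{\gamma,\varepsilon})$. Then for $t\in(0,T]$, \[ n_{\gamma,\varepsilon}(t,x)\ \ge\ \underline n_\gamma(t):=2\varepsilon e^{-R_\infty t}>0 . \]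
   Context: Feasible growth functions: $F_1,F_2,G_1,G_2:[0,\infty)\to\mathbb{R}$ are $C^1$ with bounded derivatives; for all $p\ge0$, $F_1'(p)<0$, $G_2'(p)<0$, $F_2'(p)\le 0$, $G_1'(p)\le 0$; there exists $P_H>0$ such that for all $p\ge P_H$: $F_1(p)\le0$, $G_2(p)\le 0$, $F_2(p)=G_1(p)=0$; and $F(0)=G(0)$ with $F:=F_1+F_2$, $G:=G_1+G_2$. Regularised problem: $n^{(i)}_{\gamma,\varepsilon}$ solve on $Q_T$ $\partial_t n^{(1)}_{\gamma,\varepsilon}=\partial_x(n^{(1)}_{\gamma,\varepsilon}\partial_xp_{\gamma,\varepsilon})+n^{(1)}_{\gamma,\varepsilon}F_1(p_{\gamma,\varepsilon})+n^{(2)}_{\gamma,\varepsilon}G_1(p_{\gamma,\varepsilon})$, $\partial_t n^{(2)}_{\gamma,\varepsilon}=\partial_x(n^{(2)}_{\gamma,\varepsilon}\partial_xp_{\gamma,\varepsilon})+n^{(1)}_{\gamma,\varepsilon}F_2(p_{\gamma,\varepsilon})+n^{(2)}_{\gamma,\varepsilon}G_2(p_{\gamma,\varepsilon})$, with $p_{\gamma,\varepsilon}=n_{\gamma,\varepsilon}^\gamma$, initial data $n^{(i)}_{\gamma,\varepsilon}(0)=n^{(i)}_{\gamma,\mathrm{init}}+\varepsilon$, and homogeneous Neumann boundary conditions $\partial_x n_{\gamma,\varepsilon}(t,\pm L)=0$; the total density satisfies (in the strong sense) $\partial_t n_{\gamma,\varepsilon}-\frac{\gamma}{\gamma+1}\partial_x^2(n_{\gamma,\varepsilon}^{\gamma+1})=n_{\gamma,\varepsilon}R_{\gamma,\varepsilon}$.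 The fractions are $c^{(i)}_{\gamma,\varepsilon}=n^{(i)}_{\gamma,\varepsilon}/n_{\gamma,\varepsilon}$. *)

From Stdlib Require Import Reals.
From Coquelicot Require Import Coquelicot.
Open Scope R_scope.

(* x^a for x > 0; 0 otherwise (only used for nonnegative densities). *)
Definition rpow (x a : R) : R := if Rlt_dec 0 x then Rpower x a else 0.

(* derivative of f at x relative to the set D (one-sided at endpoints) *)
Definition deriv_within (D : R -> Prop) (f : R -> R) (x l : R) : Prop :=
  filterlim (fun y => (f y - f x) / (y - x))
    (within (fun y => D y /\ y <> x) (locally x)) (locally l).

Definition cont_within (D : R -> Prop) (f : R -> R) (x : R) : Prop :=
  filterlim f (within D (locally x)) (locally (f x)).

Definition nonneg (p : R) : Prop := 0 <= p.

Definition C1_bdd_with (f f' : R -> R) : Prop :=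
  (forall p, 0 <= p -> deriv_within nonneg f p (f' p)) /\
  (forall p, 0 <= p -> cont_within nonneg f' p) /\
  (exists M, forall p, 0 <= p -> Rabs (f' p) <= M).

Definition feasible (F1 F2 G1 G2 : R -> R) : Prop :=
  exists F1' F2' G1' G2' : R -> R,
    C1_bdd_with F1 F1' /\ C1_bdd_with F2 F2' /\
    C1_bdd_with G1 G1' /\ C1_bdd_with G2 G2' /\
    (forall p, 0 <= p -> F1' p < 0 /\ G2' p < 0 /\ F2' p <= 0 /\ G1' p <= 0) /\
    (exists PH, 0 < PH /\ forall p, PH <= p ->
        F1 p <= 0 /\ G2 p <= 0 /\ F2 p = 0 /\ G1 p = 0) /\
    F1 0 + F2 0 = G1 0 + G2 0.

Definition ntot (n1 n2 : R -> R -> R) (t x : R) : R := n1 t x + n2 t x.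

Definition pres (gamma : R) (n1 n2 : R -> R -> R) (t x : R) : R :=
  rpow (ntot n1 n2 t x) gamma.

(* R_{gamma,eps} = c1 F(p) + c2 G(p), c_i = n_i / n *)
Definition Rgrowth (gamma : R) (F1 F2 G1 G2 : R -> R) (n1 n2 : R -> R -> R)
    (t x : R) : R :=
  let p := pres gamma n1 n2 t x in
  (n1 t x / ntot n1 n2 t x) * (F1 p + F2 p)
  + (n2 t x / ntot n1 n2 t x) * (G1 p + G2 p).

(* Classical (strong) solution of the regularised problem on [0,T] x [-L,L]. *)
Definition reg_solution (gamma eps L T : R) (F1 F2 G1 G2 init1 init2 : R -> R)
    (n1 n2 : R -> R -> R) : Prop :=
  let Ix := fun x => -L <= x <= L in
  let It := fun t => 0 <= t <= T in
  let p := pres gamma n1 n2 in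
  (forall t x, It t -> Ix x ->
     filterlim (fun z : R * R => n1 (fst z) (snd z))
       (within (fun z : R * R => It (fst z) /\ Ix (snd z)) (locally (t, x)))
       (locally (n1 t x)) /\
     filterlim (fun z : R * R => n2 (fst z) (snd z))
       (within (fun z : R * R => It (fst z) /\ Ix (snd z)) (locally (t, x)))
       (locally (n2 t x))) /\
  (exists dt1 dt2 px fx1 fx2 : R -> R -> R,
     forall t x, 0 < t <= T -> Ix x ->
       deriv_within It (fun s => n1 s x) t (dt1 t x) /\
       deriv_within It (fun s => n2 s x) t (dt2 t x) /\
       deriv_within Ix (fun y => p t y) x (px t x) /\
       deriv_within Ix (fun y => n1 t y * px t y) x (fx1 t x) /\
       deriv_within Ix (fun y => n2 t y * px t y) x (fx2 t x) /\
       dt1 t x = fx1 t x + n1 t x * F1 (p t x) + n2 t x * G1 (p t x) /\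
       dt2 t x = fx2 t x + n1 t x * F2 (p t x) + n2 t x * G2 (p t x)) /\
  (forall x, Ix x -> n1 0 x = init1 x + eps /\ n2 0 x = init2 x + eps) /\
  (forall t, 0 < t <= T ->
     deriv_within Ix (fun y => ntot n1 n2 t y) (-L) 0 /\
     deriv_within Ix (fun y => ntot n1 n2 t y) L 0) /\
  (* total density equation, strong sense *)
  (exists dt q1 q2 : R -> R -> R,
     forall t x, 0 < t <= T -> Ix x ->
       deriv_within It (fun s => ntot n1 n2 s x) t (dt t x) /\
       deriv_within Ix (fun y => rpow (ntot n1 n2 t y) (gamma + 1)) x (q1 t x) /\
       deriv_within Ix (fun y => q1 t y) x (q2 t x) /\
       dt t x = gamma / (gamma + 1) * q2 t x
                + ntot n1 n2 t x * Rgrowth gamma F1 F2 G1 G2 n1 n2 t x).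

From Pilot Require Import Defs.
From Stdlib Require Import Reals Lra Classical ClassicalEpsilon.
From Coquelicot Require Import Coquelicot.
Open Scope R_scope.

(* Write N = n1 + n2. For k > Rinf and c < 2 eps, N stays strictly above c e^(-k t).
   At a first time tau where N(tau, .) touches c e^(-k tau), say at x0, the point x0
   is a spatial minimum of N(tau, .). There the diffusion term d_xx (N^(gamma+1)) is
   nonnegative (at an endpoint because the Neumann condition makes d_x (N^(gamma+1))
   vanish), so d_t N >= N R >= -Rinf N, the bound on R extending from the open
   cylinder to (tau, x0) by continuity. But touching from above forces
   d_t N <= -k N < -Rinf N. Letting k -> Rinf and c -> 2 eps gives the claim. *)

Notation Icc a b := (fun y : R => a <= y <= b).

Lemma ball_R (x y : R) (e : R) : ball x e y <-> Rabs (y - x) < e.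
Proof. reflexivity. Qed.

Lemma within_proper {U : UniformSpace} (D : U -> Prop) (x : U) :
  (forall e : posreal, exists y, D y /\ ball x e y) ->
  ProperFilter' (within D (locally x)).
Proof.
  intros Hadh; constructor.
  - intros [e He]. destruct (Hadh e) as [y [Dy Hy]]. exact (He y Hy Dy).
  - apply within_filter, locally_filter.
Qed.

Lemma ball_left (a x : R) (e : posreal) : a < x -> exists y, a < y < x /\ ball x e y.
Proof.
  intros Hax. pose proof (cond_pos e). pose proof (Rmin_l e (x - a)). pose proof (Rmin_r e (x - a)).
  assert (0 < Rmin e (x - a)) by (apply Rmin_pos; lra).
  exists (x - Rmin e (x - a) / 2). split; [lra|].
  apply ball_R. rewrite Rabs_left; lra.
Qed.

Lemma ball_right (x b : R) (e : posreal) : x < b -> exists y, x < y < b /\ ball x e y.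
Proof.
  intros Hxb. pose proof (cond_pos e). pose proof (Rmin_l e (b - x)). pose proof (Rmin_r e (b - x)).
  assert (0 < Rmin e (b - x)) by (apply Rmin_pos; lra).
  exists (x + Rmin e (b - x) / 2). split; [lra|].
  apply ball_R. rewrite Rabs_right; lra.
Qed.

Lemma within_subset {T : Type} {F : (T -> Prop) -> Prop} {FF : Filter F}
  (D E : T -> Prop) :
  (forall y, E y -> D y) -> filter_le (within E F) (within D F).
Proof.
  intros HED P HP. unfold within in *.
  apply (filter_imp (fun y => D y -> P y)); [auto|exact HP].
Qed.

Lemma filterlim_le_const {T : Type} (F : (T -> Prop) -> Prop) {FF : ProperFilter' F}
  (f : T -> R) (l c : R) :
  filterlim f F (locally l) -> F (fun y => f y <= c) -> l <= c.
Proof. intros Hf Hc. exact (filterlim_le f (fun _ => c) l c Hc Hf (filterlim_const c)). Qed.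

Lemma filterlim_ge_const {T : Type} (F : (T -> Prop) -> Prop) {FF : ProperFilter' F}
  (f : T -> R) (l c : R) :
  filterlim f F (locally l) -> F (fun y => c <= f y) -> c <= l.
Proof. intros Hf Hc. exact (filterlim_le (fun _ => c) f c l Hc (filterlim_const c) Hf). Qed.

Lemma filterlim_Rplus {T : Type} (F : (T -> Prop) -> Prop) {FF : Filter F}
  (f g : T -> R) (a b : R) :
  filterlim f F (locally a) -> filterlim g F (locally b) ->
  filterlim (fun y => f y + g y) F (locally (a + b)).
Proof. intros Ha Hb. exact (filterlim_comp_2 f g Rplus Ha Hb (filterlim_plus a b)). Qed.

Lemma filterlim_Rmult {T : Type} (F : (T -> Prop) -> Prop) {FF : Filter F}
  (f g : T -> R) (a b : R) :
  filterlim f F (locally a) -> filterlim g F (locally b) ->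
  filterlim (fun y => f y * g y) F (locally (a * b)).
Proof. intros Ha Hb. exact (filterlim_comp_2 f g Rmult Ha Hb (filterlim_mult a b)). Qed.

Lemma filterlim_Rinv {T : Type} (F : (T -> Prop) -> Prop) {FF : Filter F}
  (f : T -> R) (a : R) :
  a <> 0 -> filterlim f F (locally a) -> filterlim (fun y => / f y) F (locally (/ a)).
Proof.
  intros Ha Hf. eapply filterlim_comp; [exact Hf|].
  apply (filterlim_Rbar_inv (Finite a)). intros E. apply Ha. now injection E.
Qed.

Lemma filterlim_within_codomain {T : Type} (F : (T -> Prop) -> Prop) {FF : Filter F}
  (f : T -> R) (D : R -> Prop) (l : R) :
  filterlim f F (locally l) -> (forall y, D (f y)) -> filterlim f F (within D (locally l)).
Proof.
  intros Hf HD P HP. unfold filtermap. apply (filter_imp (fun y => D (f y) -> P (f y))).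
  - intros y HPy. exact (HPy (HD y)).
  - exact (Hf _ HP).
Qed.

Lemma filterlim_slice_fst (g : R * R -> R) (A B : R -> Prop) (t x l : R) : B x ->
  filterlim g (within (fun z : R * R => A (fst z) /\ B (snd z)) (locally (t, x))) (locally l) ->
  filterlim (fun s => g (s, x)) (within A (locally t)) (locally l).
Proof.
  intros Bx Hg P HP. destruct (Hg P HP) as [e He].
  exists e. intros s Hs As.
  apply (He (s, x)); [split; [exact Hs|apply ball_center]|split; assumption].
Qed.

Section DerivWithin.

Variables (D : R -> Prop) (f : R -> R) (x l : R).
Hypothesis Hf : deriv_within D f x l.

Let quotient (y : R) := (f y - f x) / (y - x).

Lemma deriv_within_restrict (E : R -> Prop) :
  (forall y, E y -> D y /\ y <> x) ->
  filterlim quotient (within E (locally x)) (locally l).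
Proof. intros HE. exact (filterlim_filter_le_1 _ (within_subset _ _ HE) Hf). Qed.

Lemma deriv_within_continuous : cont_within D f x.
Proof.
  set (D' := fun y => D y /\ y <> x).
  assert (Hshift : filterlim (fun y => y - x) (within D' (locally x)) (locally 0)).
  { apply (filterlim_filter_le_1 _ (filter_le_within _)).
    replace 0 with (x - x) by ring.
    apply (ex_derive_continuous (fun y => y - x)). auto_derive. exact I. }
  assert (Hlin := filterlim_Rplus _ _ _ _ _ (filterlim_const (f x))
                    (filterlim_Rmult _ _ _ _ _ Hf Hshift)).
  rewrite Rmult_0_r, Rplus_0_r in Hlin.
  assert (HD' : filterlim f (within D' (locally x)) (locally (f x))).
  { eapply filterlim_within_ext; [|exact Hlin].
    intros y [_ Hy]. simpl. field. lra. }
  intros P HP. specialize (HD' P HP). unfold filtermap, within in *.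
  apply (filter_imp (fun y => D' y -> P (f y))); [|exact HD'].
  intros y HPy Dy. destruct (Req_dec y x) as [->|Hne].
  - exact (locally_singleton _ _ HP).
  - exact (HPy (conj Dy Hne)).
Qed.

Lemma deriv_within_left_bound (a m : R) :
  a < x -> (forall y, a < y < x -> D y) ->
  (forall y, a < y < x -> f x - f y <= m * (x - y)) -> l <= m.
Proof.
  intros Hax HD Hm.
  apply (filterlim_le_const (within (fun y => a < y < x) (locally x)) (FF :=
           within_proper _ _ (fun e => ball_left a x e Hax)) quotient).
  - apply deriv_within_restrict. intros y Hy. split; [apply HD|]; lra.
  - unfold within. apply filter_forall. intros y Hy. unfold quotient.
    replace ((f y - f x) / (y - x)) with ((f x - f y) / (x - y)) by (field; lra).
    apply Rle_div_l; [lra|]. now apply Hm.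
Qed.

Lemma deriv_within_right_bound (b m : R) :
  x < b -> (forall y, x < y < b -> D y) ->
  (forall y, x < y < b -> m * (y - x) <= f y - f x) -> m <= l.
Proof.
  intros Hxb HD Hm.
  apply (filterlim_ge_const (within (fun y => x < y < b) (locally x)) (FF :=
           within_proper _ _ (fun e => ball_right x b e Hxb)) quotient).
  - apply deriv_within_restrict. intros y Hy. split; [apply HD|]; lra.
  - unfold within. apply filter_forall. intros y Hy. unfold quotient.
    apply Rle_div_r; [lra|]. now apply Hm.
Qed.

Lemma deriv_within_interior (a b : R) :
  a < x < b -> (forall y, a < y < b -> D y) -> is_derive f x l.
Proof.
  intros Hx HD. apply is_derive_Reals. intros e He.
  destruct (proj1 (filterlim_locally _ _) Hf (mkposreal e He)) as [d Hd].
  assert (Hr : 0 < Rmin d (Rmin (x - a) (b - x)))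
    by (repeat apply Rmin_pos; try apply cond_pos; lra).
  exists (mkposreal _ Hr). intros h Hh0 Hh. simpl in Hh.
  pose proof (Rmin_l d (Rmin (x - a) (b - x))). pose proof (Rmin_r d (Rmin (x - a) (b - x))).
  pose proof (Rmin_l (x - a) (b - x)). pose proof (Rmin_r (x - a) (b - x)).
  apply Rabs_lt_between in Hh as Hhb.
  specialize (Hd (x + h)). replace (x + h - x) with h in Hd by ring.
  apply Hd; [apply ball_R; replace (x + h - x) with h by ring; lra|].
  split; [apply HD|]; lra.
Qed.

Lemma deriv_within_neg_eventually : l < 0 ->
  exists d, 0 < d /\ forall y, D y -> y <> x -> Rabs (y - x) < d -> quotient y < 0.
Proof.
  intros Hl.
  destruct (proj1 (filterlim_locally _ _) Hf (mkposreal (- l) ltac:(lra))) as [d Hd].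
  exists d. split; [apply cond_pos|]. intros y Dy Hne Hy.
  specialize (Hd y Hy (conj Dy Hne)). apply (proj1 (ball_R _ _ _)), Rabs_lt_between in Hd.
  simpl in Hd. unfold quotient. lra.
Qed.

End DerivWithin.

Lemma within_punctured_Icc_proper (a b x : R) :
  a < b -> a <= x <= b -> ProperFilter' (within (fun y => a <= y <= b /\ y <> x) (locally x)).
Proof.
  intros Hab Hx. apply within_proper. intros e.
  destruct (Rlt_or_le x b) as [Hxb|Hxb].
  - destruct (ball_right x b e Hxb) as [y [Hy Hye]]. exists y. split; [split|]; auto; lra.
  - destruct (ball_left a x e ltac:(lra)) as [y [Hy Hye]]. exists y. split; [split|]; auto; lra.
Qed.

Lemma MVT_closed_interval (f df : R -> R) (a b : R) : a < b ->
  (forall z, a <= z <= b -> is_derive f z (df z)) ->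
  exists c, a <= c <= b /\ f b - f a = df c * (b - a).
Proof.
  intros Hab Hd.
  destruct (MVT_gen f a b df) as [c [Hc Heq]]; rewrite ?Rmin_left, ?Rmax_right in * by lra.
  - intros z Hz. apply Hd. lra.
  - intros z Hz. apply continuity_pt_filterlim.
    apply (ex_derive_continuous (K := R_AbsRing) (V := R_NormedModule)).
    exists (df z). apply Hd. lra.
  - exists c. auto.
Qed.

Lemma lt_right_of_deriv_neg (f df : R -> R) (D : R -> Prop) (x h : R) :
  0 < h -> cont_within D f x ->
  (forall z, x < z <= x + h -> D z /\ is_derive f z (df z) /\ df z < 0) ->
  f (x + h) < f x.
Proof.
  intros Hh Hc Hd. set (m := x + h / 2).
  assert (Hdec : forall u v, x < u < v -> v <= x + h -> f v < f u).
  { intros u v Huv Hv. destruct (MVT_closed_interval f df u v) as [c [Hcuv Heq]]; [lra| |].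
    - intros z Hz. apply Hd. lra.
    - assert (df c < 0) by (apply Hd; lra). nra. }
  assert (Hm : f m <= f x).
  { apply (filterlim_ge_const (within (fun z => x < z < m) (locally x))
             (FF := within_proper _ _ (fun e => ball_right x m e ltac:(unfold m; lra))) f).
    - refine (filterlim_filter_le_1 _ (within_subset _ _ _) Hc).
      intros z Hz. apply Hd. unfold m in Hz. lra.
    - unfold within. apply filter_forall. intros z Hz. left. apply Hdec; unfold m in *; lra. }
  assert (f (x + h) < f m) by (apply Hdec; unfold m; lra).
  lra.
Qed.

Lemma lt_left_of_deriv_pos (f df : R -> R) (D : R -> Prop) (x h : R) :
  0 < h -> cont_within D f x ->
  (forall z, x - h <= z < x -> D z /\ is_derive f z (df z) /\ 0 < df z) ->
  f (x - h) < f x.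
Proof.
  intros Hh Hc Hd. set (m := x - h / 2).
  assert (Hinc : forall u v, u < v < x -> x - h <= u -> f u < f v).
  { intros u v Huv Hu. destruct (MVT_closed_interval f df u v) as [c [Hcuv Heq]]; [lra| |].
    - intros z Hz. apply Hd. lra.
    - assert (0 < df c) by (apply Hd; lra). nra. }
  assert (Hm : f m <= f x).
  { apply (filterlim_ge_const (within (fun z => m < z < x) (locally x))
             (FF := within_proper _ _ (fun e => ball_left m x e ltac:(unfold m; lra))) f).
    - refine (filterlim_filter_le_1 _ (within_subset _ _ _) Hc).
      intros z Hz. apply Hd. unfold m in Hz. lra.
    - unfold within. apply filter_forall. intros z Hz. left. apply Hinc; unfold m in *; lra. }
  assert (f (x - h) < f m) by (apply Hinc; unfold m; lra).
  lra.
Qed.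

Lemma deriv2_nonneg_at_min (a b : R) (f q1 : R -> R) (x0 q2 : R) :
  a < b -> a <= x0 <= b ->
  (forall y, a <= y <= b -> f x0 <= f y) ->
  (forall y, a <= y <= b -> deriv_within (Icc a b) f y (q1 y)) ->
  q1 x0 = 0 -> deriv_within (Icc a b) q1 x0 q2 -> 0 <= q2.
Proof.
  intros Hab Hx0 Hmin Hf Hq0 Hq2.
  destruct (Rle_or_lt 0 q2) as [|Hneg]; [assumption|exfalso].
  destruct (deriv_within_neg_eventually _ _ _ _ Hq2 Hneg) as [d [Hd Hsign]].
  rewrite Hq0 in Hsign.
  assert (Hcont := deriv_within_continuous _ _ _ _ (Hf x0 Hx0)).
  assert (Hint : forall z, a < z < b -> is_derive f z (q1 z)).
  { intros z Hz. apply (deriv_within_interior _ _ _ _ (Hf z ltac:(lra)) a b Hz). intros y Hy; lra. }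
  pose proof (Rmin_l d (b - a)). pose proof (Rmin_r d (b - a)).
  destruct (Rlt_or_le x0 b) as [Hxb|Hxb].
  - set (h := Rmin d (b - x0) / 2).
    pose proof (Rmin_l d (b - x0)). pose proof (Rmin_r d (b - x0)).
    assert (0 < h) by (unfold h; pose proof (Rmin_pos d (b - x0) Hd ltac:(lra)); lra).
    assert (f x0 <= f (x0 + h)) by (apply Hmin; unfold h in *; lra).
    enough (f (x0 + h) < f x0) by lra.
    apply (lt_right_of_deriv_neg f q1 (Icc a b)); [lra|exact Hcont|].
    intros z Hz. unfold h in *. split; [lra|]. split; [apply Hint; lra|].
    assert (Hq := Hsign z ltac:(lra) ltac:(lra) ltac:(rewrite Rabs_right; lra)).
    replace (q1 z) with ((q1 z - 0) / (z - x0) * (z - x0)) by (field; lra).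
    apply Rmult_neg_pos; lra.
  - set (h := Rmin d (b - a) / 2).
    assert (0 < h) by (unfold h; pose proof (Rmin_pos d (b - a) Hd ltac:(lra)); lra).
    assert (f x0 <= f (x0 - h)) by (apply Hmin; unfold h in *; lra).
    enough (f (x0 - h) < f x0) by lra.
    apply (lt_left_of_deriv_pos f q1 (Icc a b)); [lra|exact Hcont|].
    intros z Hz. unfold h in *. split; [lra|]. split; [apply Hint; lra|].
    assert (Hq := Hsign z ltac:(lra) ltac:(lra) ltac:(rewrite Rabs_left; lra)).
    replace (q1 z) with ((q1 z - 0) / (z - x0) * (z - x0)) by (field; lra).
    apply Rmult_neg_neg; lra.
Qed.

Lemma rpow_Rpower (a c : R) : 0 < a -> rpow a c = Rpower a c.
Proof. intros Ha. unfold rpow. destruct (Rlt_dec 0 a); [reflexivity|lra]. Qed.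

Lemma rpow_nonneg (a c : R) : 0 <= rpow a c.
Proof. unfold rpow. destruct (Rlt_dec 0 a); [left; apply exp_pos|lra]. Qed.

Lemma rpow_le (a b c : R) : 0 <= c -> 0 < a <= b -> rpow a c <= rpow b c.
Proof. intros Hc Hab. rewrite !rpow_Rpower by lra. apply Rle_Rpower_l; lra. Qed.

Lemma is_derive_rpow (c b : R) : 0 < b ->
  is_derive (fun a => rpow a c) b (c * Rpower b (c - 1)).
Proof.
  intros Hb. apply (is_derive_ext_loc (fun a => Rpower a c)).
  - exists (mkposreal b Hb). intros a Ha. apply (proj1 (ball_R _ _ _)), Rabs_lt_between in Ha.
    simpl in Ha. rewrite rpow_Rpower by lra. reflexivity.
  - apply is_derive_Reals, derivable_pt_lim_power, Hb.
Qed.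

Lemma rpow_continuous (c b : R) : 0 < b -> continuous (fun a => rpow a c) b.
Proof.
  intros Hb. apply (ex_derive_continuous (K := R_AbsRing) (V := R_NormedModule)).
  eexists. exact (is_derive_rpow c b Hb).
Qed.

Lemma is_derive_lipschitz_at (h : R -> R) (u l : R) : is_derive h u l ->
  locally u (fun v => Rabs (h v - h u) <= (Rabs l + 1) * Rabs (v - u)).
Proof.
  intros Hd. apply is_derive_Reals in Hd. destruct (Hd 1 Rlt_0_1) as [d Hd1].
  exists d. intros v Hv. change R in v. apply (proj1 (ball_R _ _ _)) in Hv.
  destruct (Req_dec v u) as [->|Hne].
  - rewrite !Rminus_diag, Rabs_R0. lra.
  - specialize (Hd1 (v - u) ltac:(lra) Hv). replace (u + (v - u)) with v in Hd1 by ring.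
    replace (h v - h u) with ((h v - h u) / (v - u) * (v - u)) by (field; lra).
    rewrite Rabs_mult. apply Rmult_le_compat_r; [apply Rabs_pos|].
    pose proof (Rabs_triang_inv ((h v - h u) / (v - u)) l). lra.
Qed.

Lemma deriv_within_comp_flat (D : R -> Prop) (g h : R -> R) (x l : R) :
  deriv_within D g x 0 -> is_derive h (g x) l -> deriv_within D (fun y => h (g y)) x 0.
Proof.
  intros Hg Hh. set (C := Rabs l + 1). set (D' := fun y => D y /\ y <> x).
  assert (HC : 0 < C) by (unfold C; pose proof (Rabs_pos l); lra).
  assert (Hlip : within D' (locally x)
                   (fun y => Rabs (h (g y) - h (g x)) <= C * Rabs (g y - g x))).
  { exact (filterlim_filter_le_1 _ (within_subset _ _ (fun y (Hy : D' y) => proj1 Hy))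
             (deriv_within_continuous _ _ _ _ Hg) _ (is_derive_lipschitz_at h (g x) l Hh)). }
  apply filterlim_locally. intros eps.
  assert (Hsmall := proj1 (filterlim_locally _ _) Hg
                      (mkposreal (eps / C) (Rdiv_lt_0_compat _ _ (cond_pos eps) HC))).
  assert (HD' : within D' (locally x) D') by (unfold within; apply filter_forall; auto).
  apply (filter_imp (fun y => D' y /\ (Rabs (h (g y) - h (g x)) <= C * Rabs (g y - g x)
                          /\ ball 0 (eps / C) ((g y - g x) / (y - x))))).
  - intros y [[_ Hne] [Hy1 Hy2]]. apply (proj1 (ball_R _ _ _)) in Hy2. apply ball_R.
    rewrite Rminus_0_r in *. rewrite Rabs_div in * by lra.
    apply (Rmult_lt_compat_l C) in Hy2; [|exact HC].
    replace (C * (eps / C)) with (pos eps) in Hy2 by (field; lra).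
    assert (0 < Rabs (y - x)) by (apply Rabs_pos_lt; lra).
    apply Rle_lt_trans with (C * (Rabs (g y - g x) / Rabs (y - x))); [|exact Hy2].
    unfold Rdiv. rewrite <- Rmult_assoc. apply Rmult_le_compat_r; [|exact Hy1].
    left. apply Rinv_0_lt_compat. assumption.
  - apply filter_and; [exact HD'|apply filter_and; [exact Hlip|exact Hsmall]].
Qed.

Lemma flux_vanishes_at_min (a b c : R) (N : R -> R) (x0 l : R) :
  a < b -> a <= x0 <= b -> 0 <= c -> 0 < N x0 ->
  (forall y, a <= y <= b -> N x0 <= N y) ->
  deriv_within (Icc a b) N a 0 -> deriv_within (Icc a b) N b 0 ->
  deriv_within (Icc a b) (fun y => rpow (N y) c) x0 l -> l = 0.
Proof.
  intros Hab Hx0 Hc HN Hmin Ha Hb Hl.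
  assert (Hflat : x0 = a \/ x0 = b -> l = 0).
  { intros Hend.
    assert (Hf0 : deriv_within (Icc a b) (fun y => rpow (N y) c) x0 0).
    { eapply (deriv_within_comp_flat _ N (fun u => rpow u c) x0); [|exact (is_derive_rpow c _ HN)].
      destruct Hend as [->| ->]; assumption. }
    exact (filterlim_locally_unique (FF := within_punctured_Icc_proper a b x0 Hab Hx0)
             _ _ _ Hl Hf0). }
  destruct (Req_dec x0 a) as [Ea|Na]; [now apply Hflat; left|].
  destruct (Req_dec x0 b) as [Eb|Nb]; [now apply Hflat; right|].
  assert (Hmono : forall y, a <= y <= b -> rpow (N x0) c <= rpow (N y) c).
  { intros y Hy. apply rpow_le; [exact Hc|]. split; [exact HN|]. now apply Hmin. }
  apply Rle_antisym.
  - apply (deriv_within_left_bound _ _ _ _ Hl a); [lra|intros y Hy; lra|].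
    intros y Hy. specialize (Hmono y ltac:(lra)). lra.
  - apply (deriv_within_right_bound _ _ _ _ Hl b); [lra|intros y Hy; lra|].
    intros y Hy. specialize (Hmono y ltac:(lra)). lra.
Qed.

Lemma diffusion_nonneg_at_min (a b c : R) (N q1 : R -> R) (x0 q2 : R) :
  a < b -> a <= x0 <= b -> 0 <= c -> 0 < N x0 ->
  (forall y, a <= y <= b -> N x0 <= N y) ->
  deriv_within (Icc a b) N a 0 -> deriv_within (Icc a b) N b 0 ->
  (forall y, a <= y <= b -> deriv_within (Icc a b) (fun y => rpow (N y) c) y (q1 y)) ->
  deriv_within (Icc a b) q1 x0 q2 -> 0 <= q2.
Proof.
  intros Hab Hx0 Hc HN Hmin Ha Hb Hq1 Hq2.
  apply (deriv2_nonneg_at_min a b (fun y => rpow (N y) c) q1 x0 q2 Hab Hx0); auto.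
  - intros y Hy. apply rpow_le; [exact Hc|]. split; [exact HN|]. now apply Hmin.
  - exact (flux_vanishes_at_min a b c N x0 _ Hab Hx0 Hc HN Hmin Ha Hb (Hq1 x0 Hx0)).
Qed.

Section Comparison.

Variables (N : R -> R -> R) (L T r k c : R).
Hypothesis HT : 0 < T.
Hypothesis Hr : 0 <= r.
Hypothesis Hrk : r < k.
Hypothesis Hc : 0 < c.
Hypothesis HN : forall t x, 0 <= t <= T -> -L <= x <= L ->
  filterlim (fun z : R * R => N (fst z) (snd z))
    (within (fun z : R * R => (0 <= fst z <= T) /\ (-L <= snd z <= L)) (locally (t, x)))
    (locally (N t x)).
Hypothesis Hinit : forall x, -L <= x <= L -> c < N 0 x.
Hypothesis Hmin : forall tau x0, 0 < tau <= T -> -L <= x0 <= L -> 0 < N tau x0 ->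
  (forall y, -L <= y <= L -> N tau x0 <= N tau y) ->
  exists dt, deriv_within (Icc 0 T) (fun s => N s x0) tau dt /\ - r * N tau x0 <= dt.

Let b (s : R) := c * exp (- k * s).

Let b_pos (s : R) : 0 < b s.
Proof. unfold b. pose proof (exp_pos (- k * s)). nra. Qed.

Let b_antitone (s1 s2 : R) : s1 <= s2 -> b s2 <= b s1.
Proof.
  intros Hs. unfold b. apply Rmult_le_compat_l; [lra|].
  destruct (Rle_lt_or_eq_dec _ _ Hs) as [Hlt|Heq].
  - left. apply exp_increasing. nra.
  - rewrite Heq. lra.
Qed.

Let b_above_tangent (s tau : R) : b tau - k * b tau * (s - tau) <= b s.
Proof.
  unfold b. replace (- k * s) with (- k * tau + - k * (s - tau)) by ring.
  rewrite exp_plus. pose proof (exp_ineq1_le (- k * (s - tau))).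
  assert (0 < c * exp (- k * tau)) by (apply Rmult_lt_0_compat; [lra|apply exp_pos]).
  enough (0 <= c * exp (- k * tau) * (exp (- k * (s - tau)) - (1 + - k * (s - tau)))) by nra.
  apply Rmult_le_pos; lra.
Qed.

Let strict_bound_persists (s : R) : 0 <= s <= T ->
  (forall x, -L <= x <= L -> b s < N s x) ->
  exists d, 0 < d /\ forall s' x, s <= s' <= s + d -> s' <= T -> -L <= x <= L -> b s' < N s' x.
Proof.
  intros Hs Hpos.
  assert (Hloc : forall x, exists dx : posreal, -L <= x <= L ->
            forall s' y, 0 <= s' <= T -> -L <= y <= L ->
            Rabs (s' - s) < dx -> Rabs (y - x) < dx -> b s < N s' y).
  { intros x. destruct (classic (-L <= x <= L)) as [Hx|Hx];
      [|exists (mkposreal 1 Rlt_0_1); tauto].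
    destruct (proj1 (filterlim_locally _ _) (HN s x Hs Hx)
                (mkposreal _ (Rgt_minus _ _ (Hpos x Hx)))) as [dx Hdx].
    exists dx. intros _ s' y Hs' Hy H1 H2.
    specialize (Hdx (s', y) (conj H1 H2) (conj Hs' Hy)).
    apply (proj1 (ball_R _ _ _)), Rabs_lt_between in Hdx. simpl in Hdx. lra. }
  destruct (choice _ Hloc) as [delta Hdelta].
  destruct (compactness_value_1d (-L) L delta) as [d Hd].
  exists (d / 2). split; [pose proof (cond_pos d); lra|].
  intros s' y Hs' Hs'T Hy. apply Rnot_le_lt. intros Hle.
  apply (Hd y Hy). intros [x [Hx [Hyx Hdx]]].
  assert (b s < N s' y).
  { apply (Hdelta x Hx s' y); [lra|exact Hy| |].
    - rewrite Rabs_right by lra. pose proof (cond_pos d). lra.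
    - exact Hyx. }
  pose proof (b_antitone s s' ltac:(lra)). lra.
Qed.

Let bounded_until (s : R) :=
  forall s' x, 0 <= s' <= s -> -L <= x <= L -> b s' < N s' x.

Let bounded_until_0 : bounded_until 0.
Proof.
  intros s' x Hs' Hx. replace s' with 0 by lra.
  unfold b. rewrite Rmult_0_r, exp_0, Rmult_1_r. now apply Hinit.
Qed.

Let bounded_until_extends (s : R) : 0 <= s < T -> bounded_until s ->
  exists s2, s < s2 <= T /\ bounded_until s2.
Proof.
  intros Hs Hgood.
  destruct (strict_bound_persists s ltac:(lra)) as [d [Hd Hpers]].
  { intros x Hx. apply Hgood; [lra|exact Hx]. }
  exists (Rmin (s + d) T). split.
  - split; [apply Rmin_glb_lt; lra|apply Rmin_r].
  - intros s' x Hs' Hx. destruct (Rle_or_lt s' s) as [Hle|Hlt].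
    + apply Hgood; [lra|exact Hx].
    + pose proof (Rmin_l (s + d) T). pose proof (Rmin_r (s + d) T).
      apply Hpers; [lra|lra|exact Hx].
Qed.

Let no_first_touch (tau : R) : 0 < tau <= T ->
  (forall s, 0 <= s < tau -> bounded_until s) ->
  forall x, -L <= x <= L -> b tau < N tau x.
Proof.
  intros Htau Hbefore.
  assert (Hge : forall y, -L <= y <= L -> b tau <= N tau y).
  { intros y Hy.
    apply (filterlim_ge_const (within (fun s => 0 < s < tau) (locally tau))
             (FF := within_proper _ _ (fun e => ball_left 0 tau e ltac:(lra))) (fun s => N s y)).
    - refine (filterlim_filter_le_1 _ (within_subset (Icc 0 T) _ _) _).
      + intros s Hs. lra.
      + exact (filterlim_slice_fst (fun z => N (fst z) (snd z)) (Icc 0 T) (Icc (-L) L)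
                 tau y _ Hy (HN tau y ltac:(lra) Hy)).
    - unfold within. apply filter_forall. intros s Hs.
      pose proof (b_antitone s tau ltac:(lra)).
      enough (b s < N s y) by lra. apply (Hbefore s); [lra|lra|exact Hy]. }
  intros x Hx.
  destruct (Rle_lt_or_eq_dec _ _ (Hge x Hx)) as [Hlt|Htouch]; [exact Hlt|exfalso].
  pose proof (b_pos tau).
  destruct (Hmin tau x Htau Hx ltac:(lra)) as [dt [Hdt Hdt_ge]].
  { intros y Hy. rewrite <- Htouch. exact (Hge y Hy). }
  assert (Hdt_le : dt <= - k * b tau).
  { apply (deriv_within_left_bound _ _ _ _ Hdt 0); [lra|intros s Hs; lra|].
    intros s Hs. pose proof (b_above_tangent s tau).
    assert (b s < N s x) by (apply (Hbefore s); [lra|lra|exact Hx]).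
    lra. }
  rewrite <- Htouch in Hdt_ge. nra.
Qed.

Lemma above_exp_subsolution (s x : R) : 0 <= s <= T -> -L <= x <= L ->
  c * exp (- k * s) < N s x.
Proof.
  set (E := fun s => 0 <= s <= T /\ bounded_until s).
  destruct (completeness E) as [tau [Hub Hlub]].
  - exists T. intros s' [Hs' _]. lra.
  - exists 0. split; [lra|exact bounded_until_0].
  - assert (Hbefore : forall s', 0 <= s' < tau -> bounded_until s').
    { intros s' Hs'. apply NNPP. intros Hbad.
      assert (tau <= s'); [|lra].
      apply Hlub. intros e [He Hge]. apply Rnot_lt_le. intros Hlt.
      apply Hbad. intros s'' y Hs'' Hy. apply Hge; [lra|exact Hy]. }
    assert (Htau0 : 0 < tau).
    { destruct (bounded_until_extends 0 ltac:(lra) bounded_until_0) as [s2 [Hs2 Hgood]].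
      assert (Hs2E : E s2) by (split; [lra|exact Hgood]).
      specialize (Hub s2 Hs2E). lra. }
    assert (HtauT : tau <= T) by (apply Hlub; intros e [He _]; lra).
    assert (Hgood : bounded_until tau).
    { intros s' y Hs' Hy. destruct (Rle_lt_or_eq_dec _ _ (proj2 Hs')) as [Hlt|Heq].
      - apply (Hbefore s'); [lra|lra|exact Hy].
      - rewrite Heq. exact (no_first_touch tau ltac:(lra) Hbefore y Hy). }
    destruct (Rle_lt_or_eq_dec _ _ HtauT) as [HltT|Heq].
    + destruct (bounded_until_extends tau ltac:(lra) Hgood) as [s2 [Hs2 Hgood2]].
      assert (Hs2E : E s2) by (split; [lra|exact Hgood2]).
      specialize (Hub s2 Hs2E). lra.
    + intros Hs Hx. apply (Hgood s x); [lra|exact Hx].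
Qed.

End Comparison.

Lemma le_of_forall_pos_exp (a r t n : R) :
  (forall d, 0 < d -> a * exp (- d) * exp (- (r + d) * t) < n) -> a * exp (- r * t) <= n.
Proof.
  intros H.
  set (phi := fun d => a * exp (- d) * exp (- (r + d) * t)).
  assert (Hphi : continuous phi 0).
  { apply (ex_derive_continuous (K := R_AbsRing) (V := R_NormedModule)).
    unfold phi. auto_derive. exact I. }
  replace (a * exp (- r * t)) with (phi 0)
    by (unfold phi; rewrite Ropp_0, exp_0, Rplus_0_r; ring).
  apply (filterlim_le_const (at_right 0)
           (FF := Proper_StrongProper _ (at_right_proper_filter 0)) phi).
  - exact (filterlim_filter_le_1 _ (filter_le_within _) Hphi).
  - exists (mkposreal 1 Rlt_0_1). intros d _ Hd. left. exact (H d Hd).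
Qed.

(* [Rgrowth gamma F1 F2 G1 G2 n1 n2 t x] unfolds to
   [reaction_rate gamma F1 F2 G1 G2 (n1 t x) (n2 t x)]. *)
Definition reaction_rate (gamma : R) (F1 F2 G1 G2 : R -> R) (u v : R) : R :=
  let p := rpow (u + v) gamma in
  u / (u + v) * (F1 p + F2 p) + v / (u + v) * (G1 p + G2 p).

Lemma reaction_rate_continuous (gamma : R) (F1 F2 G1 G2 : R -> R)
  {T : Type} (F : (T -> Prop) -> Prop) {FF : Filter F} (u v : T -> R) (u0 v0 : R) :
  feasible F1 F2 G1 G2 -> 0 < u0 + v0 ->
  filterlim u F (locally u0) -> filterlim v F (locally v0) ->
  filterlim (fun y => reaction_rate gamma F1 F2 G1 G2 (u y) (v y)) F
    (locally (reaction_rate gamma F1 F2 G1 G2 u0 v0)).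
Proof.
  intros Hfeas Hpos Hu Hv.
  destruct Hfeas as [F1' [F2' [G1' [G2' [[HF1 _] [[HF2 _] [[HG1 _] [[HG2 _] _]]]]]]]].
  assert (Hs := filterlim_Rplus F u v u0 v0 Hu Hv).
  assert (Hp : filterlim (fun y => rpow (u y + v y) gamma) F
                 (within Defs.nonneg (locally (rpow (u0 + v0) gamma)))).
  { apply (filterlim_within_codomain F _ _ _
             (filterlim_comp _ _ _ _ _ _ _ _ Hs (rpow_continuous gamma _ Hpos))).
    intros y. apply rpow_nonneg. }
  assert (HK : forall K K' : R -> R, (forall p, 0 <= p -> deriv_within Defs.nonneg K p (K' p)) ->
            filterlim (fun y => K (rpow (u y + v y) gamma)) F
              (locally (K (rpow (u0 + v0) gamma)))).
  { intros K K' HK. eapply filterlim_comp; [exact Hp|].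
    exact (deriv_within_continuous _ _ _ _ (HK _ (rpow_nonneg _ _))). }
  assert (Hinv := filterlim_Rinv F _ _ (Rgt_not_eq _ _ Hpos) Hs).
  unfold reaction_rate, Rdiv.
  apply (filterlim_Rplus F); apply (filterlim_Rmult F);
    try (apply (filterlim_Rmult F); assumption);
    apply (filterlim_Rplus F); eapply HK; eassumption.
Qed.

Lemma Rabs_le_of_adherent {U : UniformSpace} (D E : U -> Prop) (g : U -> R) (z : U) (M : R) :
  (forall e : posreal, exists y, E y /\ ball z e y) -> (forall y, E y -> D y) ->
  filterlim g (within D (locally z)) (locally (g z)) ->
  (forall y, E y -> Rabs (g y) <= M) -> Rabs (g z) <= M.
Proof.
  intros Hadh HED Hg HM.
  assert (HgE := filterlim_filter_le_1 _ (within_subset _ _ HED) Hg).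
  assert (HEM : within E (locally z) (fun y => - M <= g y <= M)).
  { unfold within. apply filter_forall. intros y Ey. apply Rabs_le_between, HM, Ey. }
  apply Rabs_le. split.
  - apply (filterlim_ge_const _ (FF := within_proper E z Hadh) g _ _ HgE).
    exact (filter_imp _ _ (fun y Hy => proj1 Hy) HEM).
  - apply (filterlim_le_const _ (FF := within_proper E z Hadh) g _ _ HgE).
    exact (filter_imp _ _ (fun y Hy => proj2 Hy) HEM).
Qed.

Lemma cylinder_adherent (L T t x : R) : 0 < L -> 0 < t <= T -> -L <= x <= L ->
  forall e : posreal, exists z : R * R, (0 < fst z < T /\ -L < snd z < L) /\ ball (t, x) e z.
Proof.
  intros HL Ht Hx e.
  destruct (ball_left 0 t e ltac:(lra)) as [s [Hs Hse]].
  destruct (Rlt_or_le x L) as [HxL|HxL].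
  - destruct (ball_right x L e HxL) as [y [Hy Hye]].
    exists (s, y). split; [simpl; lra|split; assumption].
  - destruct (ball_left (-L) x e ltac:(lra)) as [y [Hy Hye]].
    exists (s, y). split; [simpl; lra|split; assumption].
Qed.

Lemma Rgrowth_bound_extends (gamma eps L T Rinf : R) (F1 F2 G1 G2 init1 init2 : R -> R)
  (n1 n2 : R -> R -> R) :
  0 < L -> feasible F1 F2 G1 G2 ->
  reg_solution gamma eps L T F1 F2 G1 G2 init1 init2 n1 n2 ->
  (forall t x, 0 < t < T -> -L < x < L ->
     Rabs (Rgrowth gamma F1 F2 G1 G2 n1 n2 t x) <= Rinf) ->
  forall t x, 0 < t <= T -> -L <= x <= L -> 0 < ntot n1 n2 t x ->
    Rabs (Rgrowth gamma F1 F2 G1 G2 n1 n2 t x) <= Rinf.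
Proof.
  intros HL Hfeas [Hcont _] HR t x Ht Hx Hpos.
  destruct (Hcont t x ltac:(lra) Hx) as [H1 H2].
  apply (Rabs_le_of_adherent (fun z : R * R => (0 <= fst z <= T) /\ (-L <= snd z <= L))
           (fun z : R * R => (0 < fst z < T) /\ (-L < snd z < L))
           (fun z => Rgrowth gamma F1 F2 G1 G2 n1 n2 (fst z) (snd z)) (t, x)).
  - exact (cylinder_adherent L T t x HL Ht Hx).
  - simpl. intros z Hz. lra.
  - exact (reaction_rate_continuous gamma F1 F2 G1 G2 _ _ _ _ _ Hfeas Hpos H1 H2).
  - intros z [Hz1 Hz2]. exact (HR _ _ Hz1 Hz2).
Qed.

Lemma time_derivative_at_spatial_min (gamma eps L T Rinf : R)
  (F1 F2 G1 G2 init1 init2 : R -> R) (n1 n2 : R -> R -> R) :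
  1 < gamma -> 0 < L -> feasible F1 F2 G1 G2 ->
  reg_solution gamma eps L T F1 F2 G1 G2 init1 init2 n1 n2 ->
  (forall t x, 0 < t < T -> -L < x < L ->
     Rabs (Rgrowth gamma F1 F2 G1 G2 n1 n2 t x) <= Rinf) ->
  forall tau x0, 0 < tau <= T -> -L <= x0 <= L -> 0 < ntot n1 n2 tau x0 ->
  (forall y, -L <= y <= L -> ntot n1 n2 tau x0 <= ntot n1 n2 tau y) ->
  exists dt, deriv_within (Icc 0 T) (fun s => ntot n1 n2 s x0) tau dt /\
             - Rinf * ntot n1 n2 tau x0 <= dt.
Proof.
  intros Hgamma HL Hfeas Hsol HR tau x0 Htau Hx0 Hpos Hmin.
  assert (Hreact := Rgrowth_bound_extends _ _ _ _ _ _ _ _ _ _ _ _ _ HL Hfeas Hsol HR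
                      tau x0 Htau Hx0 Hpos).
  destruct Hsol as [_ [_ [_ [Hneu [dt [q1 [q2 Htot]]]]]]].
  destruct (Htot tau x0 Htau Hx0) as [Hdt [_ [Hq2 Hpde]]].
  exists (dt tau x0). split; [exact Hdt|].
  assert (Hdiff : 0 <= q2 tau x0).
  { apply (diffusion_nonneg_at_min (-L) L (gamma + 1) (ntot n1 n2 tau) (q1 tau) x0);
      try lra; try assumption.
    - exact (proj1 (Hneu tau Htau)).
    - exact (proj2 (Hneu tau Htau)).
    - intros y Hy. exact (proj1 (proj2 (Htot tau y Htau Hy))). }
  assert (0 <= gamma / (gamma + 1)) by (apply Rlt_le, Rdiv_lt_0_compat; lra).
  apply Rabs_le_between in Hreact.
  rewrite Hpde. nra.
Qed.

Lemma ntot_continuous (gamma eps L T : R) (F1 F2 G1 G2 init1 init2 : R -> R)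
  (n1 n2 : R -> R -> R) :
  reg_solution gamma eps L T F1 F2 G1 G2 init1 init2 n1 n2 ->
  forall t x, 0 <= t <= T -> -L <= x <= L ->
  filterlim (fun z : R * R => ntot n1 n2 (fst z) (snd z))
    (within (fun z : R * R => (0 <= fst z <= T) /\ (-L <= snd z <= L)) (locally (t, x)))
    (locally (ntot n1 n2 t x)).
Proof.
  intros [Hcont _] t x Ht Hx. destruct (Hcont t x Ht Hx) as [H1 H2].
  exact (filterlim_Rplus _ _ _ _ _ H1 H2).
Qed.

Lemma ntot_initial_bound (gamma eps L T : R) (F1 F2 G1 G2 init1 init2 : R -> R)
  (n1 n2 : R -> R -> R) :
  reg_solution gamma eps L T F1 F2 G1 G2 init1 init2 n1 n2 ->
  (forall x, 0 <= init1 x) -> (forall x, 0 <= init2 x) ->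
  forall x, -L <= x <= L -> 2 * eps <= ntot n1 n2 0 x.
Proof.
  intros [_ [_ [Hinit _]]] H1 H2 x Hx. destruct (Hinit x Hx) as [E1 E2].
  unfold ntot. rewrite E1, E2. specialize (H1 x). specialize (H2 x). lra.
Qed.

Theorem proposition2p5 (gamma eps L T Rinf : R)
  (F1 F2 G1 G2 init1 init2 : R -> R) (n1 n2 : R -> R -> R) :
  1 < gamma -> 0 < eps -> 0 < L -> 0 < T ->
  feasible F1 F2 G1 G2 ->
  (forall x, 0 <= init1 x) -> (forall x, 0 <= init2 x) ->
  (forall x, ~ (-L < x < L) -> init1 x = 0 /\ init2 x = 0) ->
  reg_solution gamma eps L T F1 F2 G1 G2 init1 init2 n1 n2 ->
  0 < Rinf ->
  (forall t x, 0 < t < T -> -L < x < L ->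
     Rabs (Rgrowth gamma F1 F2 G1 G2 n1 n2 t x) <= Rinf) ->
  forall t x, 0 < t <= T -> -L < x < L ->
    2 * eps * exp (- Rinf * t) <= ntot n1 n2 t x /\
    0 < 2 * eps * exp (- Rinf * t).
Proof.
  intros Hgamma Heps HL HT Hfeas Hinit1 Hinit2 _ Hsol HRinf HR t x Ht Hx.
  split; [|pose proof (exp_pos (- Rinf * t)); nra].
  apply le_of_forall_pos_exp. intros d Hd.
  assert (Hdecay : 0 < exp (- d) < 1).
  { split; [apply exp_pos|]. rewrite <- exp_0. apply exp_increasing. lra. }
  apply (above_exp_subsolution (ntot n1 n2) L T Rinf (Rinf + d) (2 * eps * exp (- d)));
    try lra.
  - nra.
  - exact (ntot_continuous _ _ _ _ _ _ _ _ _ _ _ _ Hsol).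
  - intros y Hy.
    pose proof (ntot_initial_bound _ _ _ _ _ _ _ _ _ _ _ _ Hsol Hinit1 Hinit2 y Hy). nra.
  - exact (time_derivative_at_spatial_min _ _ _ _ _ _ _ _ _ _ _ _ _ Hgamma HL Hfeas Hsol HR).
Qed.
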